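(* Let $F\neq\{0\}$ be a finite abelian group, and let $A$ and $A_1$ be skew braces on $F\times\mathbb{Z}/2\mathbb{Z}$ constructed from data $(\phi,y,z)$ and $(\phi_1,y_1,z_1)$ respectively, as described in the context. Then $A$ and $A_1$ are isomorphic if and only if there exists $\sigma\in\operatorname{Aut}(F)$ such that $\phi_1=\sigma\circ\phi\circ\sigma^{-1}$, $\sigma(y)=y_1$, and $z_1-\sigma(z)\in\phi_1(F)$.
   Context: Admissible data on a finite abelian group $F\ne\{0\}$: a triple $(\phi,y,z)$ with $\phi\in\operatorname{End}(F)$, $y,z\in F$, $2y=0$, $\phi(z)=\phi(y)-2z$, $\phi(\phi(f))=-2\phi(f)$ for all $f\in F$, and such that the map $\psi\colon F\times\mathbb{Z}/2\mathbb{Z}\times\mathbb{Z}/2\mathbb{Z}\to F$, $\psi(f,k_1,k_2)=[k_2](\phi(f)-[k_1]z)$, is surjective. Here for $k\in\mathbb{Z}/2\mathbb{Z}$, $[k]\in\{0,1\}$ is its representative. The skew brace built from $(\phi,y,z)$ is the set $F\times\mathbb{Z}/2\mathbb{Z}$ with $(f_1,k_1)+(f_2,k_2)=(f_1+(-1)^{k_1}f_2+[k_1][k_2]y,\,k_1+k_2)$ and $(f_1,k_1)\circ(f_2,k_2)=(f_1+(-1)^{k_1}f_2+\psi(f_1,k_1,k_2)+[k_1][k_2]y,\,k_1+k_2)$. (A skew brace is a triple $(A,+,\circ)$ of two group structures with $a\circ(b+c)=a\circ b-a+a\circ c$; an isomorphism of skew braces is a bijection that is a homomorphism for both operations.) 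*)

From HB Require Import structures.
From mathcomp Require Import all_boot all_algebra.
Set Implicit Arguments. Unset Strict Implicit. Unset Printing Implicit Defensive.
Import GRing.Theory.
Local Open Scope ring_scope.

Definition is_endo (F : zmodType) (phi : F -> F) : Prop :=
  forall a b : F, phi (a + b) = phi a + phi b.

Definition is_aut (F : zmodType) (sigma : F -> F) : Prop :=
  is_endo sigma /\ bijective sigma.

(* Z/2Z is represented by bool: false = 0, true = 1; addition is xor (addb);
   the representative [k] in {0,1} of k acts by "if k then _ else 0". *)

Definition psi (F : zmodType) (phi : F -> F) (z : F) (f : F) (k1 k2 : bool) : F :=
  if k2 then phi f - (if k1 then z else 0) else 0.

Definition admissible (F : zmodType) (phi : F -> F) (y z : F) : Prop :=
  [/\ is_endo phi,
      y + y = 0,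
      phi z = phi y - (z + z),
      (forall f : F, phi (phi f) = - (phi f + phi f)) &
      (forall g : F, exists f k1 k2, psi phi z f k1 k2 = g)].

Definition sb_add (F : zmodType) (y : F) (a b : F * bool) : F * bool :=
  (a.1 + (if a.2 then - b.1 else b.1) + (if a.2 && b.2 then y else 0),
   addb a.2 b.2).

Definition sb_circ (F : zmodType) (phi : F -> F) (y z : F)
    (a b : F * bool) : F * bool :=
  (a.1 + (if a.2 then - b.1 else b.1) + psi phi z a.1 a.2 b.2
     + (if a.2 && b.2 then y else 0),
   addb a.2 b.2).

Definition sb_iso (F : zmodType) (phi : F -> F) (y z : F)
    (phi1 : F -> F) (y1 z1 : F) (g : F * bool -> F * bool) : Prop :=
  [/\ bijective g,
      (forall a b, g (sb_add y a b) = sb_add y1 (g a) (g b)) &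
      (forall a b, g (sb_circ phi y z a b) = sb_circ phi1 y1 z1 (g a) (g b))].

Definition sb_isomorphic (F : zmodType) (phi : F -> F) (y z : F)
    (phi1 : F -> F) (y1 z1 : F) : Prop :=
  exists g, sb_iso phi y z phi1 y1 z1 g.

From HB Require Import structures.
From mathcomp Require Import all_boot all_algebra.
Import GRing.Theory.
Set Implicit Arguments. Unset Strict Implicit. Unset Printing Implicit Defensive.
Local Open Scope ring_scope.

(* The key notion is that of a twist: for s : F -> F and w : F, the map
     sb_twist s w : (f, k) |-> (s f + [k] w, k).
   The proof has two halves.
   1. Twists are characterised: sb_twist s w is bijective iff s is; it is a
      homomorphism of the additive groups iff s is additive and s y = y1;
      and, given that, it respects the circle operations iff s intertwines
      phi with phi1 and z1 - s z = phi1 w.  The last fact goes through the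
      decomposition  a o b = (psi(a,b), 0) + (a + b)  of the circle
      operation, which reduces it to s intertwining the maps psi.
   2. Every skew brace isomorphism g is a twist, with s = first component of
      g on F x {0} and w = first component of g (0, 1): by surjectivity of
      psi, g maps F x {0} into itself, and it respects the Z/2Z component. *)

Lemma endo0 (F : zmodType) (f : F -> F) : is_endo f -> f 0 = 0.
Proof. by move=> fD; apply/(addrI (f 0)); rewrite -fD !addr0. Qed.

Lemma endoN (F : zmodType) (f : F -> F) : is_endo f -> forall x, f (- x) = - f x.
Proof. by move=> fD x; apply/(addrI (f x)); rewrite -fD !subrr endo0. Qed.

Section SkewBraceOperations.
Variable F : zmodType.
Implicit Types (phi : F -> F) (y z : F) (a b c : F * bool).

Lemma sb_circE phi y z a b :
  sb_circ phi y z a b = sb_add y (psi phi z a.1 a.2 b.2, false) (sb_add y a b).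
Proof.
rewrite /sb_circ /sb_add /= addr0; congr (_, _).
by rewrite [RHS]addrC addrAC.
Qed.

Lemma sb_add_cancelr y a b c : sb_add y a c = sb_add y b c -> a = b.
Proof.
case: a b c => [f k] [h l] [x m]; rewrite /sb_add /= => [[]].
by case: k; case: l; case: m => //= e _; congr (_, _); move: e;
  rewrite ?addr0 => /addIr // /addIr.
Qed.

End SkewBraceOperations.

Definition sb_twist (F : zmodType) (s : F -> F) (w : F) (a : F * bool) :
    F * bool :=
  (s a.1 + (if a.2 then w else 0), a.2).

Section Twists.
Variables (F : zmodType) (s : F -> F) (w : F).
Local Notation tw := (sb_twist s w).

Lemma sb_twist_even f : tw (f, false) = (s f, false).
Proof. by rewrite /sb_twist /= addr0. Qed.

Lemma sb_twist_bijective : bijective tw <-> bijective s.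
Proof.
split=> [[ti tK tiK] | [si sK siK]].
- exists (fun h => (ti (h, false)).1) => h.
    by rewrite -sb_twist_even tK.
  have := tiK (h, false); case: (ti (h, false)) => x [] //.
  by rewrite sb_twist_even => -[].
- exists (fun a => (si (a.1 - (if a.2 then w else 0)), a.2)) => -[f k].
    by rewrite /sb_twist /= addrK sK.
  by rewrite /sb_twist /= siK subrK.
Qed.

Lemma sb_twist_add_hom (y y1 : F) :
  (forall a b, tw (sb_add y a b) = sb_add y1 (tw a) (tw b)) <->
  is_endo s /\ s y = y1.
Proof.
split=> [hom | [sD sy]].
- have sD : is_endo s.
    by move=> f h; have := hom (f, false) (h, false);
      rewrite /sb_add /= !addr0 !sb_twist_even => -[].
  split=> //; have := hom (0, true) (0, true).
  by rewrite /sb_add /sb_twist /= oppr0 !addr0 add0r subrr add0r => -[].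
- have sN := endoN sD.
  case=> [f1 [|]] [f2 [|]]; rewrite /sb_twist /sb_add /= ?addr0 ?sD ?sN ?sy;
    congr (_, _).
  + by rewrite opprD addrACA subrr addr0.
  + by rewrite addrAC.
  + by rewrite addrA.
Qed.

Section CircleOperation.
Variables (phi : F -> F) (y z : F) (phi1 : F -> F) (y1 z1 : F).
Hypotheses (sD : is_endo s) (sy : s y = y1).

(* An additive twist respects the circle operations iff it intertwines psi;
   this follows from sb_circE and right cancellation. *)
Lemma sb_twist_circ_hom :
  (forall a b, tw (sb_circ phi y z a b) = sb_circ phi1 y1 z1 (tw a) (tw b)) <->
  (forall f k1 k2, s (psi phi z f k1 k2) = psi phi1 z1 (tw (f, k1)).1 k1 k2).
Proof.
have [_ tD] := sb_twist_add_hom y y1.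
have {}tD := tD (conj sD sy).
have tcirc a b : tw (sb_circ phi y z a b) =
    sb_add y1 (s (psi phi z a.1 a.2 b.2), false) (tw (sb_add y a b)).
  by rewrite sb_circE tD sb_twist_even.
split=> [hom f k1 k2 | hpsi a b].
- have := hom (f, k1) (0, k2).
  rewrite tcirc sb_circE tD => /sb_add_cancelr [->].
  by case: k2.
- by rewrite tcirc sb_circE hpsi -tD; case: a.
Qed.

Lemma sb_twist_psi_iff : is_endo phi1 ->
  (forall f k1 k2, s (psi phi z f k1 k2) = psi phi1 z1 (tw (f, k1)).1 k1 k2) <->
  (forall f, phi1 (s f) = s (phi f)) /\ z1 - s z = phi1 w.
Proof.
move=> phi1D; have sN := endoN sD.
split=> [hpsi | [hcomm hz]].
- have hcomm f : phi1 (s f) = s (phi f).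
    by have := hpsi f false true; rewrite /psi /sb_twist /= !subr0 addr0.
  split=> //; have := hpsi 0 true true.
  rewrite /psi /sb_twist /= sD sN phi1D hcomm -addrA => /addrI ->.
  by rewrite addrCA subrr addr0.
- move=> f [] [] //=; rewrite /psi /sb_twist /= ?subr0 ?addr0 ?(endo0 sD) //.
  by rewrite sD sN phi1D hcomm -hz addrCA addrAC subrr add0r.
Qed.

End CircleOperation.
End Twists.

Section Isomorphisms.
Variables (F : zmodType) (phi : F -> F) (y z : F) (phi1 : F -> F) (y1 z1 : F).
Variable g : F * bool -> F * bool.
Hypotheses (gbij : bijective g)
  (gadd : forall a b, g (sb_add y a b) = sb_add y1 (g a) (g b))
  (gcirc : forall a b, g (sb_circ phi y z a b) = sb_circ phi1 y1 z1 (g a) (g b)).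

Lemma iso_psi a b :
  g (psi phi z a.1 a.2 b.2, false) =
  (psi phi1 z1 (g a).1 (g a).2 (g b).2, false).
Proof.
apply: (@sb_add_cancelr _ y1 _ _ (g (sb_add y a b))).
by rewrite -gadd -sb_circE gcirc sb_circE gadd.
Qed.

Hypothesis psi_surj : forall h, exists f k1 k2, psi phi z f k1 k2 = h.

(* As psi is onto F, the isomorphism maps F x {0} into itself. *)
Lemma iso_even h : (g (h, false)).2 = false.
Proof.
by have [f [k1 [k2 <-]]] := psi_surj h; rewrite (iso_psi (f, k1) (0, k2)).
Qed.

Lemma iso_is_twist : g =1 sb_twist (fun h => (g (h, false)).1) (g (0, true)).1.
Proof.
have gE h : g (h, false) = ((g (h, false)).1, false).
  by move: (iso_even h); case: (g (h, false)) => ? ? /= ->.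
have godd h : g (h, true) = sb_add y1 (g (h, false)) (g (0, true)).
  by rewrite -gadd /sb_add /= !addr0.
have g1_odd : (g (0, true)).2 = true.
  case e: (g (0, true)).2 => //; case: gbij => gi _ giK.
  have := congr1 snd (giK (0, true)); case: (gi (0, true)) => h [].
    by rewrite godd /= iso_even e.
  by rewrite iso_even.
case=> h []; rewrite /sb_twist /=; last by rewrite addr0 -gE.
by rewrite godd {1}gE /sb_add /= g1_odd addr0.
Qed.

End Isomorphisms.

Theorem mainTheorem17 (F : finZmodType) (hF : (1 < #|F|)%N)
    (phi : F -> F) (y z : F) (phi1 : F -> F) (y1 z1 : F)
    (hA : admissible phi y z) (hA1 : admissible phi1 y1 z1) :
  sb_isomorphic phi y z phi1 y1 z1 <->
  exists sigma : F -> F,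
    [/\ is_aut sigma,
        (exists sigma_inv : F -> F,
           [/\ cancel sigma sigma_inv, cancel sigma_inv sigma &
               forall f : F, phi1 f = sigma (phi (sigma_inv f))]),
        sigma y = y1 &
        exists f : F, z1 - sigma z = phi1 f].
Proof.
case: hA => _ _ _ _ psi_surj; case: hA1 => phi1D _ _ _ _.
split=> [[g [gbij gadd gcirc]] | [s [[sD _] [si [sK siK hconj]] sy [w hw]]]].
-
  have gE := iso_is_twist gbij gadd gcirc psi_surj.
  set s := fun h => (g (h, false)).1 in gE; set w := (g (0, true)).1 in gE.
  have [sD sy] : is_endo s /\ s y = y1.
    by apply/(sb_twist_add_hom s w) => a b; rewrite -!gE.
  have [hcomm hz] : (forall f, phi1 (s f) = s (phi f)) /\ z1 - s z = phi1 w.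
    apply/(sb_twist_psi_iff w phi z z1 sD phi1D).
    apply/(sb_twist_circ_hom w phi z phi1 z1 sD sy).
    by move=> a b; rewrite -!gE.
  have [si sK siK] := (sb_twist_bijective s w).1 (eq_bij gbij gE).
  exists s; split=> //; first by split; [|exists si].
    by exists si; split=> // f; rewrite -hcomm siK.
  by exists w.
-
  have hcomm f : phi1 (s f) = s (phi f) by rewrite hconj sK.
  exists (sb_twist s w); split.
  + by apply/sb_twist_bijective; exists si.
  + exact/sb_twist_add_hom.
  + apply/(sb_twist_circ_hom w phi z phi1 z1 sD sy).
    by apply/(sb_twist_psi_iff w phi z z1 sD phi1D).
Qed.
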